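(* Let $F$ be a nonempty face of $V_O$, let $\mathcal U_F=\{\lambda\in\Xi_1: F\subseteq H_\lambda\}$ and $\phi(F)=\bigcup_{\lambda\in\mathcal U_F}\mathrm{supp}(\lambda)$. Then $\phi(F)$ is a strongly connected orientation of a subgraph of $G$, and for every $\lambda\in\Xi_1$ we have $\lambda\in\mathcal U_F$ if and only if $\mathrm{supp}(\lambda)\subseteq\phi(F)$.
   Context: $G=(V,E)$ is a finite connected graph, possibly with parallel edges and loops; $\mathbb E$ is the set of oriented edges ($e$ and its reverse $\bar e$). Real $1$-chains $x:\mathbb E\to\mathbb R$ satisfy $x_{\bar e}=-x_e$; $\langle x,y\rangle=\sum_{e\in E}x_ey_e$, $q(x)=\langle x,x\rangle$. A flow satisfies $\sum_{e\text{ with tail }v}x_e=0$ at every vertex $v$; $H$ is the space of real flows and $\Lambda$ the lattice of integer flows. $V_O=\{x\in H: q(x)\le q(x-\mu)\ \forall\mu\in\Lambda\}$. For a flow $x$, $\mathrm{supp}(x)=\{e\in\mathbb E: x_e>0\}$. A circuit is an orientation of a cycle as a directed cycle; $x^C_e=1$ if $e\in C$, $-1$ if $\bar e\in C$, $0$ otherwise. $\Xi_1=\{x^C: C\text{ a circuit}\}$. For $\lambda\in\Xi_1$, $H_\lambda=\{x\in H: 2\langle x,\lambda\rangle=q(\lambda)\}$. An orientation of a subgraph is strongly connected if on each connected component any two vertices are joined by directed paths in both directions. *)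

(* Real numbers are modelled by an arbitrary real field R. *)
From HB Require Import structures.
From mathcomp Require Import all_boot all_order all_algebra.
From Stdlib Require Import Relations.
Set Implicit Arguments. Unset Strict Implicit. Unset Printing Implicit Defensive.
Import Order.TTheory GRing.Theory Num.Theory.
Local Open Scope ring_scope.

(* A finite graph with vertex type V and edge type E (parallel edges and loops
   allowed): edge e goes from tl e to hd e in its reference orientation.
   Oriented edges are pairs (e, b) : E * bool; (e, true) is e and (e, false)
   is its reverse.  A 1-chain is a function x : E -> R giving its value on
   the reference orientation; its value on an oriented edge is [ochain]. *)
Section Graph.
Variables (R : realFieldType) (V E : finType) (tl hd : E -> V).

Definition otail (o : E * bool) : V := if o.2 then tl o.1 else hd o.1.
Definition ohead (o : E * bool) : V := if o.2 then hd o.1 else tl o.1.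

Definition ochain (x : E -> R) (o : E * bool) : R :=
  if o.2 then x o.1 else - x o.1.

Definition connected_graph : Prop :=
  forall u v : V, clos_refl_trans V
    (fun a b => exists e, (tl e = a /\ hd e = b) \/ (tl e = b /\ hd e = a)) u v.

Definition dot (x y : E -> R) : R := \sum_(e : E) x e * y e.
Definition qf (x : E -> R) : R := dot x x.

Definition is_flow (x : E -> R) : Prop :=
  forall v : V, \sum_(o : E * bool | otail o == v) ochain x o = 0.

Definition is_int_flow (mu : E -> R) : Prop :=
  is_flow mu /\ exists z : E -> int, forall e, mu e = (z e)%:~R.

Definition VO (x : E -> R) : Prop :=
  is_flow x /\ forall mu, is_int_flow mu -> qf x <= qf (fun e => x e - mu e).

(* F is a face of V_O: intersection of V_O with a supporting hyperplane
   (F = V_O itself is obtained with a = 0, b = 0). *)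
Definition is_face_VO (F : (E -> R) -> Prop) : Prop :=
  exists (a : E -> R) (b : R),
    (forall x, VO x -> dot a x <= b) /\
    (forall x, F x <-> (VO x /\ dot a x = b)).

Definition is_circuit (c : seq (E * bool)) : Prop :=
  [/\ c != [::], uniq (map fst c), uniq (map otail c)
    & cycle (fun o1 o2 => ohead o1 == otail o2) c].

Definition chi (c : seq (E * bool)) : E -> R :=
  fun e => if (e, true) \in c then 1 else if (e, false) \in c then -1 else 0.

Definition in_Xi1 (lam : E -> R) : Prop :=
  exists c, is_circuit c /\ lam = chi c.

Definition in_Hlam (lam x : E -> R) : Prop :=
  is_flow x /\ 2 * dot x lam = qf lam.

Definition supp (x : E -> R) : pred (E * bool) := fun o => 0 < ochain x o.

Definition in_UF (F : (E -> R) -> Prop) (lam : E -> R) : Prop :=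
  in_Xi1 lam /\ forall x, F x -> in_Hlam lam x.

Definition phi (F : (E -> R) -> Prop) (o : E * bool) : Prop :=
  exists lam, in_UF F lam /\ supp lam o.

(* S is an orientation of a subgraph (no edge in both directions) which is
   strongly connected: vertices in the same connected component of the
   underlying subgraph are joined by a directed path in S. *)
Definition strongly_connected_orientation (S : E * bool -> Prop) : Prop :=
  (forall e, ~ (S (e, true) /\ S (e, false))) /\
  (forall u v : V,
     clos_refl_trans V (fun a b => exists o, S o /\
        ((otail o = a /\ ohead o = b) \/ (otail o = b /\ ohead o = a))) u v ->
     clos_refl_trans V (fun a b => exists o, S o /\ otail o = a /\ ohead o = b) u v).

End Graph.

From Pilot Require Import Defs.
From HB Require Import structures.
From mathcomp Require Import all_boot all_order all_algebra zify lra.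
From Stdlib Require Import Relations.
Set Implicit Arguments. Unset Strict Implicit. Unset Printing Implicit Defensive.
Import Order.TTheory GRing.Theory Num.Theory.
Local Open Scope ring_scope.

(* For x in V_O give the oriented edge o the weight w_x(o) = 1 - 2 x_o.  The
   weight of a circuit C is q(x^C) - 2<x, x^C> = q(x - x^C) - q(x) >= 0, and
   C is in U_F exactly when its weight vanishes on F.  A closed walk splits
   into circuits and back-and-forth traversals of an edge (of weight 2), so
   every closed walk has nonnegative weight.  For o in phi(F), the rest of a
   tight circuit through o is a walk back from the head of o to its tail,
   inside phi(F), of weight -w_x(o).  Hence an edge of phi(F) in both
   directions would close a walk of weight -2, every undirected step in
   phi(F) can be reversed inside phi(F), and a circuit C with support in
   phi(F) can be walked backwards inside phi(F) with weight -w_x(C), so that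
   w_x(C) = 0. *)

Section Walks.
Variables (V E : finType) (tl hd : E -> V).
Notation ot := (otail tl hd).
Notation oh := (Defs.ohead tl hd).

Definition orev (o : E * bool) : E * bool := (o.1, ~~ o.2).

Lemma otail_rev o : ot (orev o) = oh o.
Proof. by case: o => e []. Qed.

Lemma ohead_rev o : oh (orev o) = ot o.
Proof. by case: o => e []. Qed.

Lemma orevK : involutive orev.
Proof. by case=> e b; rewrite /orev negbK. Qed.

Fixpoint walk (u v : V) (s : seq (E * bool)) : bool :=
  if s is o :: s' then (ot o == u) && walk (oh o) v s' else u == v.

Lemma walk_cat u v w s t : walk u v s -> walk v w t -> walk u w (s ++ t).
Proof.
elim: s u => [|o s IHs] u /=; first by move/eqP->.
by case/andP=> -> /IHs; apply.
Qed.

Lemma walk_cat_inv u w s t : walk u w (s ++ t) -> exists2 v, walk u v s & walk v w t.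
Proof.
elim: s u => [|o s IHs] u /=; first by exists u.
by case/andP=> -> /IHs[v ws wt]; exists v.
Qed.

Lemma closed_walk_shortcut u q1 a p1 b p2 : ot a = ot b ->
  walk u u (q1 ++ a :: p1 ++ b :: p2) ->
  walk (ot a) (ot a) (a :: p1) /\ walk u u (q1 ++ b :: p2).
Proof.
move=> eq_ab /walk_cat_inv[v wq1 /= /andP[/eqP av]].
move=> /walk_cat_inv[v' wp1 /= /andP[/eqP bv' wp2]].
split; first by rewrite /= eqxx eq_ab bv'.
by apply: walk_cat wq1 _; rewrite /= -eq_ab av eqxx.
Qed.

Lemma closed_walk_backtrack u q1 a p1 p2 :
  walk u u (q1 ++ a :: p1 ++ orev a :: p2) ->
  walk (oh a) (oh a) p1 /\ walk u u (q1 ++ p2).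
Proof.
move=> /walk_cat_inv[v wq1 /= /andP[/eqP av]].
move=> /walk_cat_inv[v' wp1 /= /andP[/eqP bv' wp2]].
rewrite otail_rev in bv'; rewrite ohead_rev av in wp2.
by split; [rewrite {2}bv' | apply: walk_cat wq1 wp2].
Qed.

Lemma walk_map_ohead u v s : walk u v s -> u :: map oh s = rcons (map ot s) v.
Proof.
elim: s u => [|o s IHs] u /=; first by move/eqP->.
by case/andP=> /eqP<- /IHs->.
Qed.

Lemma closed_walk_perm_ohead u s : walk u u s -> perm_eq (map ot s) (map oh s).
Proof.
by move/walk_map_ohead=> heads; rewrite -(perm_cons u) heads perm_sym perm_rcons.
Qed.

Lemma not_uniq_map_split (T T' : eqType) (f : T -> T') s : ~~ uniq (map f s) ->
  exists q1 a p1 b p2, s = q1 ++ a :: p1 ++ b :: p2 /\ f a = f b.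
Proof.
elim: s => [|a s IHs] //=; rewrite negb_and negbK => /orP[/mapP[b sb fab] | /IHs].
  by case/splitPr: sb => p1 p2; exists [::], a, p1, b, p2.
by case=> q1 [a' [p1 [b [p2 [-> fab]]]]]; exists (a :: q1), a', p1, b, p2.
Qed.

Lemma not_simple_walk_split s : ~~ (uniq (map fst s) && uniq (map ot s)) ->
  exists q1 a p1 b p2, s = q1 ++ a :: p1 ++ b :: p2 /\ (ot a = ot b \/ b = orev a).
Proof.
rewrite negb_and => /orP[] /not_uniq_map_split[q1 [a [p1 [b [p2 [-> fab]]]]]];
  exists q1, a, p1, b, p2; split => //; last by left.
case: a b fab => e [] [_ []] //= <-; by [left | right].
Qed.

Lemma walk_clos_refl_trans (S : E * bool -> Prop) u v s :
  walk u v s -> {in s, forall o, S o} ->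
  clos_refl_trans V (fun a b => exists o, S o /\ ot o = a /\ oh o = b) u v.
Proof.
elim: s u => [|o s IHs] u /=; first by move/eqP->; constructor 2.
case/andP=> /eqP ou ws Ss; apply: (rt_trans _ _ _ (oh o)).
  by apply: rt_step; exists o; split => //; apply: Ss; rewrite mem_head.
by apply: IHs => // o' so'; apply: Ss; rewrite in_cons so' orbT.
Qed.

Section WalkWeight.
Variables (R : numDomainType) (w : E * bool -> R).

Lemma reverse_walk_weight u v s : walk u v s ->
  (forall o, o \in s -> exists2 p, walk (oh o) (ot o) p & \sum_(o' <- p) w o' = - w o) ->
  exists2 q, walk v u q & \sum_(o <- q) w o = - \sum_(o <- s) w o.
Proof.
elim: s u => [|o s IHs] u /=.
  by move/eqP=> -> _; exists [::]; rewrite /= ?eqxx // !big_nil oppr0.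
case/andP=> /eqP ou ws ret.
have [q wq Wq] := IHs _ ws (fun o' so' => ret o' (mem_behead (s := o :: s) so')).
have [p wp Wp] := ret o (mem_head _ _).
exists (q ++ p); first by apply: walk_cat wq _; rewrite -ou.
by rewrite big_cat big_cons Wq Wp opprD addrC.
Qed.

Hypothesis w_rev_ge0 : forall o, 0 <= w o + w (orev o).
Hypothesis simple_closed_walk_ge0 : forall c u,
  uniq (map fst c) -> uniq (map ot c) -> walk u u c -> 0 <= \sum_(o <- c) w o.

Lemma closed_walk_weight_ge0 s u : walk u u s -> 0 <= \sum_(o <- s) w o.
Proof.
have [n] := ubnP (size s); elim: n s u => // n IHn s u /ltnSE size_s ws.
have IHs t v : walk v v t -> (size t < size s)%N -> 0 <= \sum_(o <- t) w o.
  by move=> wt lt_ts; apply: IHn wt; apply: leq_trans lt_ts size_s.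
have [simple_s | /not_simple_walk_split[q1 [a [p1 [b [p2 [def_s [eq_ab | eq_b]]]]]]]] :=
  boolP (uniq (map fst s) && uniq (map ot s)).
- by case/andP: simple_s => ufs uts; apply: simple_closed_walk_ge0 ws.
- rewrite def_s in ws; have [wa wr] := closed_walk_shortcut eq_ab ws.
  have -> : \sum_(o <- s) w o = \sum_(o <- a :: p1) w o + \sum_(o <- q1 ++ b :: p2) w o.
    by rewrite -big_cat def_s; apply: perm_big; rewrite -cat_cons perm_catCA.
  apply: addr_ge0; [apply: (IHs _ _ wa) | apply: (IHs _ _ wr)];
    by rewrite def_s !size_cat /= !size_cat /=; lia.
- rewrite def_s eq_b in ws; have [wp1 wr] := closed_walk_backtrack ws.
  have -> : \sum_(o <- s) w o = \sum_(o <- [:: a, orev a & p1 ++ q1 ++ p2]) w o.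
    rewrite def_s eq_b; apply: perm_big.
    by apply/permP => f; rewrite !count_cat /= !count_cat /=; lia.
  rewrite !big_cons big_cat addrA; apply: addr_ge0 => //.
  apply: addr_ge0; [apply: (IHs _ _ wp1) | apply: (IHs _ _ wr)];
    by rewrite def_s !size_cat /= !size_cat /=; lia.
Qed.

End WalkWeight.
End Walks.

Lemma sum_mem_count (R : pzSemiRingType) (T : finType) (P : pred T) (c : seq T) :
  uniq c -> \sum_(o | P o) ((o \in c)%:R : R) = (count P c)%:R.
Proof.
move=> uc; rewrite -sum1_count natr_sum [RHS]big_mkcond big_uniq //= big_mkcond.
by rewrite [RHS]big_mkcond; apply: eq_bigr => o _; case: (P o); case: (o \in c).
Qed.

Section Circuits.
Variables (R : realFieldType) (V E : finType) (tl hd : E -> V).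
Notation ot := (otail tl hd).
Notation oh := (Defs.ohead tl hd).
Notation linked := (fun o1 o2 : E * bool => oh o1 == ot o2).
Implicit Types (c : seq (E * bool)) (o : E * bool).

Lemma path_walk a p z : path linked a (rcons p z) = walk tl hd (oh a) (ot z) p.
Proof.
by elim: p a => [|b p IHp] a /=; rewrite ?andbT // IHp eq_sym.
Qed.

Lemma circuit_closed_walk c : is_circuit tl hd c -> exists u, walk tl hd u u c.
Proof.
case=> + _ _; case: c => [|a p] //= _; rewrite path_walk => wp.
by exists (ot a); rewrite eqxx.
Qed.

Lemma closed_walk_circuit c u : c != [::] -> uniq (map fst c) -> uniq (map ot c) ->
  walk tl hd u u c -> is_circuit tl hd c.
Proof.
move=> c_nil uf ut wc; split=> //; case: c c_nil uf ut wc => [|a p] //= _ _ _.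
by case/andP=> /eqP<-; rewrite path_walk.
Qed.

Lemma uniq_fst_orev c o : uniq (map fst c) -> o \in c -> orev o \notin c.
Proof.
elim: c => //= a c IHc /andP[a_c uc]; rewrite !in_cons negb_or => /orP[/eqP-> | oc].
  apply/andP; split; first by case: a {a_c} => e []; rewrite /orev xpair_eqE andbF.
  by apply: contra a_c => /(map_f fst).
rewrite IHc // andbT; apply/eqP => ea.
by move: a_c; rewrite -ea (map_f fst oc).
Qed.

Lemma ochain_chi c o : uniq (map fst c) ->
  ochain (chi R c) o = (o \in c)%:R - (orev o \in c)%:R.
Proof.
move=> uf; have t_f := uniq_fst_orev uf (o := (_, true)).
have f_t := uniq_fst_orev uf (o := (_, false)); rewrite /orev /= in t_f f_t.
case: o => e b; rewrite /ochain /chi /orev /=; move: (t_f e) (f_t e).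
case: b; case: ((e, true) \in c); case: ((e, false) \in c) => //= tf ft;
  by [have := tf isT | rewrite ?subr0 ?sub0r ?opprK ?oppr0].
Qed.

Lemma supp_chi c o : uniq (map fst c) -> supp (chi R c) o = (o \in c).
Proof.
move=> uf; rewrite /supp /= ochain_chi //.
have [oc | _] := boolP (o \in c); last by rewrite sub0r oppr_gt0 ltNge ler0n.
by rewrite (negbTE (uniq_fst_orev uf oc)) subr0 ltr01.
Qed.

Lemma dot_chi (y : E -> R) c : uniq (map fst c) ->
  dot y (chi R c) = \sum_(o <- c) ochain y o.
Proof.
set G := fun e b => if (e, b) \in c then ochain y (e, b) else 0.
move=> uf; rewrite big_uniq ?(map_uniq uf) //= big_mkcond.
rewrite (eq_bigr (fun p => G p.1 p.2)); last by case.
rewrite -pair_bigA /dot; apply: eq_bigr => e _; rewrite big_bool /= /G.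
rewrite (_ : chi R c e = ochain (chi R c) (e, true)) // ochain_chi // /ochain /=.
by case: (_ \in c); case: (_ \in c);
  rewrite ?subr0 ?sub0r ?subrr ?mulr0 ?mulr1 ?mulrN1 ?addr0 ?add0r.
Qed.

Lemma qf_chi c : uniq (map fst c) -> qf (chi R c) = (size c)%:R.
Proof.
move=> uf; rewrite /qf dot_chi // -sum1_size natr_sum big_seq [RHS]big_seq.
by apply: eq_bigr => o oc; rewrite ochain_chi // oc (negbTE (uniq_fst_orev uf oc)) subr0.
Qed.

Lemma chi_flow c : is_circuit tl hd c -> is_flow tl hd (chi R c).
Proof.
move=> circ v; have [_ uf _ _] := circ; have uc := map_uniq uf.
have [u /closed_walk_perm_ohead/permP/(_ (pred1 v))] := circuit_closed_walk circ.
rewrite !count_map => heads_tails.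
have rev_heads : \sum_(o | ot o == v) ((orev o \in c)%:R : R) =
                 \sum_(o | oh o == v) (o \in c)%:R.
  by rewrite (reindex_inj (inv_inj (@orevK E))); apply: eq_big => o; rewrite ?otail_rev ?orevK.
under eq_bigr => o _ do rewrite ochain_chi //.
by rewrite sumrB rev_heads !sum_mem_count // heads_tails subrr.
Qed.

Lemma chi_int_flow c : is_circuit tl hd c -> is_int_flow tl hd (chi R c).
Proof.
split; first exact: chi_flow.
exists (fun e => if (e, true) \in c then 1 else if (e, false) \in c then -1 else 0).
by move=> e; rewrite /chi; case: ifP => _; [|case: ifP].
Qed.

End Circuits.

Section Voronoi.
Variables (R : realFieldType) (V E : finType) (tl hd : E -> V).
Implicit Types (x : E -> R) (c : seq (E * bool)) (o : E * bool).

Definition vweight x o : R := 1 - 2 * ochain x o.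

Lemma vweight_orev x o : vweight x o + vweight x (orev o) = 2.
Proof. by case: o => e [] /=; rewrite /vweight /ochain /=; lra. Qed.

Lemma vweight_chi x c : uniq (map fst c) ->
  \sum_(o <- c) vweight x o = qf (chi R c) - 2 * dot x (chi R c).
Proof. by move=> uf; rewrite qf_chi // dot_chi // sumrB -sum1_size natr_sum mulr_sumr. Qed.

Lemma qf_sub x y : qf (fun e => x e - y e) = qf x - 2 * dot x y + qf y.
Proof.
rewrite /qf /dot mulr_sumr -sumrB -big_split /=; apply: eq_bigr => e _.
by rewrite -!expr2 sqrrB -mulr_natl mulrA !expr2.
Qed.

Lemma VO_circuit_weight_ge0 x c : VO tl hd x -> is_circuit tl hd c ->
  0 <= \sum_(o <- c) vweight x o.
Proof.
case=> _ x_min circ; have [_ uf _ _] := circ.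
have := x_min _ (chi_int_flow R circ).
by rewrite qf_sub vweight_chi // -addrA lerDl addrC.
Qed.

Lemma VO_closed_walk_weight_ge0 x s u : VO tl hd x -> walk tl hd u u s ->
  0 <= \sum_(o <- s) vweight x o.
Proof.
move=> VOx; apply: closed_walk_weight_ge0 => [o | c v uf ut wc].
  by rewrite vweight_orev ler0n.
have [-> | c_nil] := eqVneq c [::]; first by rewrite big_nil.
exact/VO_circuit_weight_ge0/(closed_walk_circuit c_nil uf ut wc).
Qed.

End Voronoi.

Section Face.
Variables (R : realFieldType) (V E : finType) (tl hd : E -> V) (F : (E -> R) -> Prop).
Hypothesis F_face : is_face_VO tl hd F.
Notation ot := (otail tl hd).
Notation oh := (Defs.ohead tl hd).
Notation phiF := (phi tl hd F).
Implicit Types (x : E -> R) (c : seq (E * bool)) (o : E * bool).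

Lemma face_VO x : F x -> VO tl hd x.
Proof. by case: F_face => a [b [_ defF]] /defF[]. Qed.

Lemma UF_chiE c : is_circuit tl hd c ->
  in_UF tl hd F (chi R c) <-> forall x, F x -> \sum_(o <- c) vweight x o = 0.
Proof.
move=> circ; have [_ uf _ _] := circ; rewrite /in_UF /in_Hlam.
split=> [[_ UF] x /UF[_ tight] | tight]; first by rewrite vweight_chi // -tight subrr.
split=> [|x Fx]; first by exists c.
split; first by case: (face_VO Fx).
by apply/eqP; rewrite eq_sym -subr_eq0 -vweight_chi // tight.
Qed.

Lemma phi_return_walk o : phiF o ->
  exists p, [/\ walk tl hd (oh o) (ot o) p, {in p, forall o', phiF o'} &
    forall x, F x -> \sum_(o' <- p) vweight x o' = - vweight x o].
Proof.
case=> lam [UFc]; have [[c [circ def_lam]] _] := UFc; subst lam; have [_ uf _ _] := circ.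
rewrite supp_chi // => /splitPr def_c; case: def_c UFc circ uf => p1 p2 UFc circ uf.
have [u /walk_cat_inv[v wp1 /= /andP[/eqP ov wp2]]] := circuit_closed_walk circ.
exists (p2 ++ p1); split.
- by apply: walk_cat wp2 _; rewrite ov.
- move=> o' o'p; exists (chi R (p1 ++ o :: p2)); split=> //.
  by rewrite supp_chi // mem_cat in_cons; move: o'p; rewrite mem_cat => /orP[] ->; rewrite ?orbT.
- move=> x Fx; have := (UF_chiE circ).1 UFc x Fx.
  by rewrite !big_cat big_cons /=; lra.
Qed.

Lemma phi_orientation : (exists x, F x) -> forall e, ~ (phiF (e, true) /\ phiF (e, false)).
Proof.
case=> x Fx e [/phi_return_walk[p1 [wp1 _ W1]] /phi_return_walk[p2 [wp2 _ W2]]].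
have := VO_closed_walk_weight_ge0 (face_VO Fx) (walk_cat wp1 wp2).
by rewrite big_cat W1 // W2 //; have := vweight_orev x (e, true); rewrite /orev /=; lra.
Qed.

Lemma phi_strongly_connected u v :
  clos_refl_trans V (fun a b => exists o, phiF o /\
    ((ot o = a /\ oh o = b) \/ (ot o = b /\ oh o = a))) u v ->
  clos_refl_trans V (fun a b => exists o, phiF o /\ ot o = a /\ oh o = b) u v.
Proof.
elim=> [a b [o [phio [[<- <-] | [<- <-]]]] | a | a b w _ IHab _ IHbw].
- by apply: rt_step; exists o.
- by have [p [wp phip _]] := phi_return_walk phio; apply: walk_clos_refl_trans wp phip.
- exact: rt_refl.
- exact: rt_trans IHab IHbw.
Qed.

Lemma UF_chi_of_supp_phi c : is_circuit tl hd c ->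
  (forall o, supp (chi R c) o -> phiF o) -> in_UF tl hd F (chi R c).
Proof.
move=> circ phic; have [_ uf _ _] := circ; apply/UF_chiE => // x Fx.
have [u wc] := circuit_closed_walk circ.
have [q wq Wq] : exists2 q, walk tl hd u u q &
    \sum_(o <- q) vweight x o = - \sum_(o <- c) vweight x o.
  apply: (reverse_walk_weight (w := vweight x) wc) => o oc.
  have /phic/phi_return_walk[p [wp _ Wp]] : supp (chi R c) o by rewrite supp_chi.
  by exists p; last exact: Wp.
have := VO_closed_walk_weight_ge0 (face_VO Fx) wq.
by have := VO_circuit_weight_ge0 (face_VO Fx) circ; rewrite Wq; lra.
Qed.

End Face.

Theorem mainTheorem6 (R : realFieldType) (V E : finType) (tl hd : E -> V)
  (F : (E -> R) -> Prop) :
  connected_graph tl hd ->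
  is_face_VO tl hd F ->
  (exists x, F x) ->
  strongly_connected_orientation tl hd (phi tl hd F) /\
  (forall lam : E -> R, in_Xi1 tl hd lam ->
     (in_UF tl hd F lam <-> (forall o, supp lam o -> phi tl hd F o))).
Proof.
(* Strong connectivity is only asked componentwise. *)
move=> _ F_face F_nonempty; split.
  by split; [apply: phi_orientation | apply: phi_strongly_connected].
move=> _ [c [circ ->]]; split=> [UFc o supp_o | ]; first by exists (chi R c).
exact: UF_chi_of_supp_phi.
Qed.
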